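(* The symmetric group of an infinite set $X$, with the topology of pointwise convergence (on $X$ discrete), fails topological bounded normal generation. The projective unitary group of an infinite-dimensional Hilbert space, with the (quotient of the) strong operator topology, fails topological bounded normal generation.
   Context: For $g$ in a group $G$, $g^{\pm G}=\{hgh^{-1}:h\in G\}\cup\{hg^{-1}h^{-1}:h\in G\}$; $A^{\cdot n}$ is the set of products of $n$ elements of $A$. A topological group $G$ has topological bounded normal generation if for every nontrivial $g\in G$ there is $n(g)\in\mathbb N$ with $\overline{(g^{\pm G})^{\cdot n(g)}}=G$. The projective unitary group of a Hilbert space $\mathcal H$ is $U(\mathcal H)/\mathbb S^1$. *)

From mathcomp Require Import all_boot all_algebra.
From mathcomp Require Import reals complex.
From Stdlib Require Import ClassicalEpsilon.
Set Implicit Arguments. Unset Strict Implicit. Unset Printing Implicit Defensive.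
Import GRing.Theory Num.Theory.
Local Open Scope ring_scope.

Section TBNG.
Variables (G : Type) (mul : G -> G -> G) (inv : G -> G) (one : G)
          (opn : (G -> Prop) -> Prop).

Definition conj_pm (g : G) : G -> Prop :=
  fun x => exists h, x = mul (mul h g) (inv h) \/ x = mul (mul h (inv g)) (inv h).

Fixpoint set_pow (A : G -> Prop) (n : nat) : G -> Prop :=
  match n with
  | O => fun x => x = one
  | S m => fun x => exists a b, A a /\ set_pow A m b /\ x = mul a b
  end.

Definition closure_of (A : G -> Prop) : G -> Prop :=
  fun x => forall U, opn U -> U x -> exists y, U y /\ A y.

Definition top_bounded_normal_generation : Prop :=
  forall g, g <> one -> exists n : nat,
    forall x, closure_of (set_pow (conj_pm g) n) x.
End TBNG.

Record perm_of (X : Type) := PermOf {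
  pfun : X -> X; pinv : X -> X;
  pfunK : forall x, pinv (pfun x) = x;
  pinvK : forall x, pfun (pinv x) = x }.

Section Sym.
Variable X : Type.
Definition sym_mul (f g : perm_of X) : perm_of X.
Proof.
refine (@PermOf X (fun x => pfun f (pfun g x)) (fun x => pinv g (pinv f x)) _ _).
- by move=> x; rewrite pfunK pfunK.
- by move=> x; rewrite pinvK pinvK.
Defined.
Definition sym_inv (f : perm_of X) : perm_of X :=
  @PermOf X (pinv f) (pfun f) (@pinvK X f) (@pfunK X f).
Definition sym_one : perm_of X :=
  @PermOf X (fun x => x) (fun x => x) (fun _ => erefl) (fun _ => erefl).
(* U is open iff around each of its points it contains a basic neighbourhood
   {h | h agrees with g on the finite set xs} (X discrete, pointwise conv.) *)
Definition sym_open (U : perm_of X -> Prop) : Prop :=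
  forall g, U g -> exists xs : list X,
    forall h, (forall x, List.In x xs -> pfun h x = pfun g x) -> U h.
End Sym.

Definition infinite_type (X : Type) : Prop :=
  forall xs : list X, exists x, ~ List.In x xs.

Record inner_product (R : realType) (H : lmodType R[i]) := InnerProduct {
  inner : H -> H -> R[i];
  inner_linl : forall (a : R[i]) x y z, inner (a *: x + y) z = a * inner x z + inner y z;
  inner_conj : forall x y, inner y x = (inner x y)^*;
  inner_ge0 : forall x, 0 <= inner x x;
  inner_eq0 : forall x, inner x x = 0 -> x = 0 }.

Section Hilbert.
Variables (R : realType) (H : lmodType R[i]) (ip : inner_product H).

Definition hnorm (x : H) : R[i] := sqrtC (inner ip x x).

Definition hilbert_complete : Prop :=
  forall u : nat -> H,
    (forall eps : R[i], 0 < eps -> exists N, forall m n, (N <= m)%N -> (N <= n)%N ->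
        hnorm (u m - u n) < eps) ->
    exists l, forall eps : R[i], 0 < eps -> exists N, forall n, (N <= n)%N ->
        hnorm (u n - l) < eps.

Definition infinite_dimensional : Prop :=
  forall n : nat, exists e : 'I_n -> H,
    forall i j, inner ip (e i) (e j) = (i == j)%:R.

Record unitary := Unitary {
  ufun : H -> H; uinv : H -> H;
  ufun_lin : forall (a : R[i]) x y, ufun (a *: x + y) = a *: ufun x + ufun y;
  ufunK : forall x, uinv (ufun x) = x;
  uinvK : forall x, ufun (uinv x) = x;
  ufun_inner : forall x y, inner ip (ufun x) (ufun y) = inner ip x y }.

Lemma uinv_lin (u : unitary) (a : R[i]) x y :
  uinv u (a *: x + y) = a *: uinv u x + uinv u y.
Proof.
rewrite -[in LHS](uinvK u x) -[in LHS](uinvK u y) -ufun_lin.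
by rewrite ufunK.
Qed.

Lemma uinv_inner (u : unitary) x y :
  inner ip (uinv u x) (uinv u y) = inner ip x y.
Proof. by rewrite -(ufun_inner u) !uinvK. Qed.

Definition u_mul (u v : unitary) : unitary.
Proof.
refine (@Unitary (fun x => ufun u (ufun v x)) (fun x => uinv v (uinv u x)) _ _ _ _).
- by move=> a x y; rewrite !ufun_lin.
- by move=> x; rewrite !ufunK.
- by move=> x; rewrite !uinvK.
- by move=> x y; rewrite !ufun_inner.
Defined.

Definition u_inv (u : unitary) : unitary :=
  @Unitary (uinv u) (ufun u) (@uinv_lin u) (uinvK u) (ufunK u) (@uinv_inner u).

Definition u_one : unitary.
Proof.
by refine (@Unitary (fun x => x) (fun x => x) _ _ _ _).
Defined.

Definition sot_open (V : unitary -> Prop) : Prop :=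
  forall u, V u -> exists (xs : list H) (eps : R[i]), 0 < eps /\
    forall w, (forall x, List.In x xs -> hnorm (ufun w x - ufun u x) < eps) -> V w.

(* projective unitary group U(H)/S^1 : classes u S^1 *)
Definition uclass (u : unitary) : unitary -> Prop :=
  fun w => exists lam : R[i], `|lam| = 1 /\ forall x, ufun w x = lam *: ufun u x.

Definition PU := {A : unitary -> Prop | exists u, A = uclass u}.

Definition pu_of (u : unitary) : PU := exist _ (uclass u) (ex_intro _ u erefl).

Definition pu_rep (A : PU) : unitary :=
  proj1_sig (constructive_indefinite_description _ (proj2_sig A)).

Definition pu_mul (A B : PU) : PU := pu_of (u_mul (pu_rep A) (pu_rep B)).
Definition pu_inv (A : PU) : PU := pu_of (u_inv (pu_rep A)).
Definition pu_one : PU := pu_of u_one.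

(* quotient topology of the strong operator topology *)
Definition pu_open (W : PU -> Prop) : Prop :=
  sot_open (fun u => W (pu_of u)).
End Hilbert.

(* Both groups carry a length that is subadditive and invariant under inversion
   and conjugation: for a permutation the number of points it moves, for a
   unitary (taken up to phase) the least k such that it acts as a scalar on the
   orthogonal complement of k vectors.  A transposition, resp. a reflection, has
   length 2, resp. 1, so every product of n conjugates of it and of its inverse
   has length at most 2n, resp. n.  Yet for every m there is a nonempty open set
   of elements of length > m: the permutations moving each of 2m+1 given points,
   resp. the unitaries that are, up to a phase la, strongly close to -la on m+1
   orthonormal vectors and to la on m+1 further ones.  A unitary acting as the
   scalar mu off m vectors would have mu close to both -la and la, which is
   impossible as |mu + la| + |mu - la| >= 2. *)

From mathcomp Require Import all_boot all_order all_algebra.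
From mathcomp Require Import reals complex.
From Stdlib Require Import ClassicalEpsilon.
From mathcomp Require Import ring.
Set Implicit Arguments. Unset Strict Implicit. Unset Printing Implicit Defensive.
Import Order.TTheory GRing.Theory Num.Theory.

(** * Length functions *)

Section LengthObstruction.
Variables (G : Type) (mul : G -> G -> G) (inv : G -> G) (one : G)
          (opn : (G -> Prop) -> Prop).
Variable len_le : nat -> G -> Prop.
Hypotheses (len_le_one : len_le 0 one)
  (len_le_mul : forall a b x y, len_le a x -> len_le b y -> len_le (a + b) (mul x y))
  (len_le_inv : forall k x, len_le k x -> len_le k (inv x))
  (len_le_conj : forall k h x, len_le k x -> len_le k (mul (mul h x) (inv h))).

Lemma len_le_set_pow g k n x :
  len_le k g -> set_pow mul one (conj_pm mul inv g) n x -> len_le (n * k) x.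
Proof.
move=> gk; elim: n x => [|n IHn] x /=; first by move->.
move=> [a [b [[h ha] [hb ->]]]]; rewrite mulSn; apply: len_le_mul (IHn b hb).
by case: ha => ->; apply: len_le_conj => //; apply: len_le_inv.
Qed.

Lemma not_tbng_of_len_le g k : g <> one -> len_le k g ->
  (forall m, exists2 U, opn U & exists2 x, U x & forall y, U y -> ~ len_le m y) ->
  ~ top_bounded_normal_generation mul inv one opn.
Proof.
move=> g1 gk long tbng; have [n gen] := tbng g g1.
have [U oU [x Ux longU]] := long (n * k).
have [y [Uy Py]] := gen x U oU Ux.
exact: longU y Uy (len_le_set_pow gk Py).
Qed.
End LengthObstruction.

(** * Symmetric groups *)

Section SymmetricGroup.
Variable X : Type.

Definition moves_at_most (k : nat) (p : perm_of X) :=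
  exists2 xs : list X, length xs <= k & forall x, ~ List.In x xs -> pfun p x = x.

Lemma moves_at_most_one : moves_at_most 0 (sym_one X).
Proof. by exists nil. Qed.

Lemma moves_at_most_mul a b p q :
  moves_at_most a p -> moves_at_most b q -> moves_at_most (a + b) (sym_mul p q).
Proof.
move=> [xs xs_a fix_p] [ys ys_b fix_q]; exists (xs ++ ys).
  by rewrite List.length_app leq_add.
move=> x nx /=; rewrite fix_q ?fix_p // => x_in; apply: nx; apply: List.in_or_app; tauto.
Qed.

Lemma moves_at_most_inv k p : moves_at_most k p -> moves_at_most k (sym_inv p).
Proof. by move=> [xs xs_k fix_p]; exists xs => // x nx /=; rewrite -{1}(fix_p x nx) pfunK. Qed.

Lemma moves_at_most_conj k h p :
  moves_at_most k p -> moves_at_most k (sym_mul (sym_mul h p) (sym_inv h)).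
Proof.
move=> [xs xs_k fix_p]; exists (map (pfun h) xs); first by rewrite List.length_map.
move=> x nx /=; rewrite fix_p ?pinvK // => x_in; apply: nx.
by rewrite -(pinvK h x); apply: List.in_map.
Qed.

Definition deq (a b : X) : {a = b} + {a <> b} := excluded_middle_informative (a = b).

Definition swap (a b x : X) : X := if deq x a then b else if deq x b then a else x.

Lemma swapK a b : involutive (swap a b).
Proof.
move=> x; rewrite /swap.
repeat match goal with |- context [deq ?u ?v] =>
  lazymatch u with context [deq _ _] => fail | _ => destruct (deq u v); cbn end end.
all: congruence.
Qed.

Definition transposition (a b : X) : perm_of X :=
  PermOf (swapK a b) (swapK a b).

Lemma transposition_moves_at_most_2 a b : moves_at_most 2 (transposition a b).
Proof.
exists (a :: b :: nil) => // x nx /=; rewrite /swap.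
destruct (deq x a) as [xa|xa]; first by case: nx; left.
by destruct (deq x b) as [xb|xb] => //; case: nx; right; left.
Qed.

Lemma transposition_neq_one a b : a <> b -> transposition a b <> sym_one X.
Proof.
move=> ab /(f_equal (fun p => pfun p a)) /=; rewrite /swap.
by destruct (deq a a) => // /esym.
Qed.

Hypothesis X_inf : infinite_type X.

Lemma exists_NoDup_length k : exists2 L : list X, List.NoDup L & length L = k.
Proof.
elim: k => [|k [L uL <-]]; first by exists nil => //; constructor.
by have [x xL] := X_inf L; exists (x :: L) => //; constructor.
Qed.

Definition moves_all (L : list X) (p : perm_of X) := forall x, List.In x L -> pfun p x <> x.

Lemma exists_moves_all L : exists p, moves_all L p.
Proof.
elim: L => [|a L [p mp]]; first by exists (sym_one X).
have [pa_a|pa_a] := deq (pfun p a) a; last by exists p => x [<-|] //; apply: mp.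
have [b b_a] := X_inf (a :: nil).
have ba : b <> a by move=> ba; apply: b_a; left.
exists (sym_mul (transposition a b) p) => x /= x_in; rewrite /swap.
destruct (deq (pfun p x) a) as [px_a|px_a]; cbn.
  by rewrite -(pfunK p x) px_a -{1}pa_a pfunK.
destruct (deq (pfun p x) b) as [px_b|px_b]; cbn.
  by move=> ax; apply: ba; rewrite -px_b -ax pa_a.
by case: x_in => [xa|]; [rewrite -xa in px_a * | apply: mp].
Qed.

Lemma moves_all_open L : sym_open (moves_all L).
Proof. by move=> p mp; exists L => q agree x x_in; rewrite agree //; apply: mp. Qed.

Lemma moves_all_not_moves_at_most L k p :
  List.NoDup L -> k < length L -> moves_all L p -> ~ moves_at_most k p.
Proof.
move=> uL kL mp [xs xs_k fix_p].
have L_xs : List.incl L xs by move=> x x_in; apply: NNPP => nx; exact: mp x x_in (fix_p x nx).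
have /ssrnat.leP := List.NoDup_incl_length uL L_xs.
by move=> Lxs; move: kL; rewrite ltnNge (leq_trans Lxs xs_k).
Qed.

Lemma sym_not_tbng : ~ top_bounded_normal_generation (@sym_mul X) (@sym_inv X) (sym_one X) (@sym_open X).
Proof.
have [a _] := X_inf nil; have [b b_a] := X_inf (a :: nil).
have ab : a <> b by move=> ab; apply: b_a; left.
apply: (not_tbng_of_len_le moves_at_most_one moves_at_most_mul moves_at_most_inv
  moves_at_most_conj (transposition_neq_one ab) (transposition_moves_at_most_2 a b)).
move=> m; have [L uL Lm] := exists_NoDup_length m.+1; have [p mp] := exists_moves_all L.
exists (moves_all L); first exact: moves_all_open.
by exists p => // q; apply: moves_all_not_moves_at_most; rewrite ?Lm.
Qed.
End SymmetricGroup.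

(** * Projective unitary groups *)

Lemma mem_In (T : eqType) (x : T) (s : seq T) : x \in s -> List.In x s.
Proof. by elim: s => //= a s IHs; rewrite inE => /predU1P [->|/IHs]; [left | right]. Qed.

Section InnerProductSpace.
Local Open Scope ring_scope.
Variables (R : realType) (H : lmodType R[i]) (ip : inner_product H).
Local Notation inn := (inner ip).
Local Notation hn := (hnorm ip).

Lemma inner0l z : inn 0 z = 0.
Proof.
have := inner_linl ip 1 0 0 z; rewrite scale1r addr0 mul1r => h.
by apply: (@addrI _ (inn 0 z)); rewrite addr0 -h.
Qed.

Lemma innerDl x y z : inn (x + y) z = inn x z + inn y z.
Proof. by rewrite -[x]scale1r inner_linl mul1r scale1r. Qed.

Lemma innerZl a x z : inn (a *: x) z = a * inn x z.
Proof. by rewrite -[a *: x]addr0 inner_linl inner0l addr0. Qed.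

Lemma innerNl x z : inn (- x) z = - inn x z.
Proof. by rewrite -scaleN1r innerZl mulN1r. Qed.

Lemma innerBl x y z : inn (x - y) z = inn x z - inn y z.
Proof. by rewrite innerDl innerNl. Qed.

Lemma innerDr x y z : inn z (x + y) = inn z x + inn z y.
Proof. by rewrite !(inner_conj ip ^~ z) innerDl rmorphD. Qed.

Lemma innerZr a x z : inn z (a *: x) = a^* * inn z x.
Proof. by rewrite !(inner_conj ip ^~ z) innerZl rmorphM. Qed.

Lemma inner0r z : inn z 0 = 0.
Proof. by rewrite inner_conj inner0l rmorph0. Qed.

Lemma innerBr x y z : inn z (x - y) = inn z x - inn z y.
Proof. by rewrite !(inner_conj ip ^~ z) innerBl rmorphB. Qed.

Lemma inner_suml I (r : seq I) (P : pred I) (F : I -> H) z :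
  inn (\sum_(i <- r | P i) F i) z = \sum_(i <- r | P i) inn (F i) z.
Proof. exact: (big_morph (inn^~ z) (fun x y => innerDl x y z) (inner0l z)). Qed.

Lemma hnorm_ge0 x : 0 <= hn x.
Proof. by rewrite sqrtC_ge0 inner_ge0. Qed.

Lemma hnorm_sqr x : hn x ^+ 2 = inn x x.
Proof. exact: sqrtCK. Qed.

Lemma hnorm_gt0 x : x != 0 -> 0 < hn x.
Proof.
move=> x0; rewrite sqrtC_gt0 lt_def inner_ge0 andbT.
by apply: contra_neq x0; apply: inner_eq0.
Qed.

Lemma hnorm0 : hn 0 = 0.
Proof. by rewrite /hnorm inner0l sqrtC0. Qed.

Lemma hnormZ a x : hn (a *: x) = `|a| * hn x.
Proof.
rewrite /hnorm innerZl innerZr mulrA -normCK sqrtCM ?sqrCK //.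
- by rewrite qualifE /= exprn_ge0.
- by rewrite qualifE /= inner_ge0.
Qed.

Lemma cauchy_schwarz x y : `|inn x y| <= hn x * hn y.
Proof.
have [->|y0] := eqVneq y 0; first by rewrite inner0r normr0 hnorm0 mulr0.
have yy_gt0 : 0 < inn y y by rewrite -hnorm_sqr exprn_gt0 // hnorm_gt0.
set d := inn x y.
(* expand the square norm of the component of x orthogonal to y *)
have := inner_ge0 ip (x - (d / inn y y) *: y).
rewrite innerBl !innerBr !innerZl !innerZr.
have -> : inn y x = d^* by rewrite inner_conj.
rewrite rmorphM /= rmorphV ?unitfE ?gt_eqF //= (geC0_conj (inner_ge0 ip y)).
have -> : inn x x - d^* / inn y y * d
          - (d / inn y y * d^* - d / inn y y * (d^* / inn y y * inn y y))
        = inn x x - `|d| ^+ 2 / inn y y.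
  by rewrite normCK; field; rewrite gt_eqF.
rewrite subr_ge0 ler_pdivrMr // -!hnorm_sqr -exprMn => h.
by move: h; rewrite ler_pXn2r //= ?qualifE /= ?normr_ge0 ?mulr_ge0 ?hnorm_ge0.
Qed.

Lemma hnormD x y : hn (x + y) <= hn x + hn y.
Proof.
rewrite -(@ler_pXn2r _ 2) ?qualifE /= ?hnorm_ge0 ?addr_ge0 ?hnorm_ge0 // sqrrD.
rewrite !hnorm_sqr innerDl !innerDr.
have -> : inn y x = (inn x y)^* by rewrite inner_conj.
rewrite -addrA [leRHS]addrAC -!addrA lerD2l addrA [leRHS]addrC lerD2r.
have re_le : inn x y + (inn x y)^* <= 2 * `|inn x y|.
  have hr : inn x y + (inn x y)^* \is Num.real.
    by apply/CrealP; rewrite rmorphD /= conjCK addrC.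
  apply: le_trans (real_ler_norm hr) _; apply: le_trans (ler_normD _ _) _.
  by rewrite norm_conjC mulr2n mulrDl mul1r.
apply: le_trans re_le _.
by rewrite mulr2n mulrDl mul1r -mulr2n lerMn2r /= cauchy_schwarz.
Qed.

Lemma hnorm_sum I (r : seq I) (P : pred I) (F : I -> H) :
  hn (\sum_(i <- r | P i) F i) <= \sum_(i <- r | P i) hn (F i).
Proof.
elim/big_rec2: _ => [|i s1 s2 _ IH]; first by rewrite hnorm0.
by apply: le_trans (hnormD _ _) _; rewrite lerD2l.
Qed.

Lemma hnorm_split x y z : hn (x + y) <= hn (x - z) + hn (z + y).
Proof. by rewrite -{1}(subrK z x) -addrA hnormD. Qed.

Lemma ufun0 (u : unitary ip) : ufun u 0 = 0.
Proof.
have := ufun_lin u 1 0 0; rewrite scale1r addr0 scale1r => h.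
by apply: (@addrI _ (ufun u 0)); rewrite addr0 -h.
Qed.

Lemma ufunD (u : unitary ip) x y : ufun u (x + y) = ufun u x + ufun u y.
Proof. by have := ufun_lin u 1 x y; rewrite !scale1r. Qed.

Lemma ufunZ (u : unitary ip) a x : ufun u (a *: x) = a *: ufun u x.
Proof. by rewrite -[a *: x]addr0 ufun_lin ufun0 addr0. Qed.

Lemma ufunN (u : unitary ip) x : ufun u (- x) = - ufun u x.
Proof. by rewrite -scaleN1r ufunZ scaleN1r. Qed.

Lemma ufun_sum (u : unitary ip) I (r : seq I) (P : pred I) (F : I -> H) :
  ufun u (\sum_(i <- r | P i) F i) = \sum_(i <- r | P i) ufun u (F i).
Proof. exact: (big_morph (ufun u) (ufunD u) (ufun0 u)). Qed.

Section Reflection.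
Variables (e : H) (e_unit : inn e e = 1).

Definition reflect_fun (x : H) : H := x - (2 * inn x e) *: e.

Lemma reflect_fun_lin a x y : reflect_fun (a *: x + y) = a *: reflect_fun x + reflect_fun y.
Proof.
rewrite /reflect_fun innerDl innerZl mulrDr scalerDl scalerBr scalerA mulrCA.
by rewrite opprD addrACA.
Qed.

Lemma reflect_funK : involutive reflect_fun.
Proof.
move=> x; rewrite /reflect_fun innerBl innerZl e_unit mulr1.
have -> : 2 * (inn x e - 2 * inn x e) = - (2 * inn x e) by ring.
by rewrite scaleNr opprK subrK.
Qed.

Lemma reflect_fun_inner x y : inn (reflect_fun x) (reflect_fun y) = inn x y.
Proof.
rewrite /reflect_fun innerBl !innerBr !innerZl !innerZr e_unit.
rewrite [inn e y]inner_conj rmorphM /= (geC0_conj (ler0n _ 2)).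
ring.
Qed.

Definition reflection : unitary ip :=
  Unitary reflect_fun_lin reflect_funK reflect_funK reflect_fun_inner.

Lemma reflection_orth x : inn x e = 0 -> ufun reflection x = x.
Proof. by move=> xe; rewrite /= /reflect_fun xe mulr0 scale0r subr0. Qed.

Lemma reflection_e : ufun reflection e = - e.
Proof. by rewrite /= /reflect_fun e_unit mulr1 -{1}[e]scale1r -scalerBl -scaleN1r; congr (_ *: _); ring. Qed.
End Reflection.

Definition scalar_on_orth (k : nat) (w : unitary ip) :=
  exists2 ys : seq H, (size ys <= k)%N & exists2 mu : R[i], `|mu| = 1 &
    forall x, (forall y, y \in ys -> inn x y = 0) -> ufun w x = mu *: x.

Lemma scalar_on_orth_phase k (w w' : unitary ip) (ka : R[i]) : `|ka| = 1 ->
  (forall x, ufun w' x = ka *: ufun w x) -> scalar_on_orth k w -> scalar_on_orth k w'.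
Proof.
move=> ka1 w'E [ys ys_k [mu mu1 w_mu]]; exists ys => //.
exists (ka * mu); first by rewrite normrM ka1 mu1 mulr1.
by move=> x x_ys; rewrite w'E w_mu // scalerA.
Qed.

Lemma scalar_on_orth_one : scalar_on_orth 0 (u_one ip).
Proof. by exists [::] => //; exists 1 => [|x _]; rewrite ?normr1 ?scale1r. Qed.

Lemma scalar_on_orth_mul a b (v w : unitary ip) :
  scalar_on_orth a v -> scalar_on_orth b w -> scalar_on_orth (a + b)%N (u_mul v w).
Proof.
move=> [ys1 ys1_a [mu1 mu1_1 v_mu]] [ys2 ys2_b [mu2 mu2_1 w_mu]].
exists (ys1 ++ ys2); first by rewrite size_cat leq_add.
exists (mu1 * mu2); first by rewrite normrM mu1_1 mu2_1 mulr1.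
move=> x x_ys /=; rewrite w_mu => [|y y_in]; last by rewrite x_ys // mem_cat y_in orbT.
rewrite ufunZ v_mu => [|y y_in]; last by rewrite x_ys // mem_cat y_in.
by rewrite scalerA mulrC.
Qed.

Lemma scalar_on_orth_inv k (v : unitary ip) : scalar_on_orth k v -> scalar_on_orth k (u_inv v).
Proof.
move=> [ys ys_k [mu mu1 v_mu]]; exists ys => //.
have mu0 : mu != 0 by rewrite -normr_eq0 mu1 oner_eq0.
exists mu^-1; first by rewrite normfV mu1 invr1.
move=> x x_ys; apply: (scalerI mu0); rewrite scalerA mulfV // scale1r.
by rewrite -[X in _ = X](ufunK v x) v_mu // -ufunZ.
Qed.

Lemma scalar_on_orth_conj k (h v : unitary ip) :
  scalar_on_orth k v -> scalar_on_orth k (u_mul (u_mul h v) (u_inv h)).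
Proof.
move=> [ys ys_k [mu mu1 v_mu]]; exists (map (ufun h) ys); first by rewrite size_map.
exists mu => // x x_ys /=; rewrite v_mu ?ufunZ ?uinvK // => y y_in.
by rewrite -(ufun_inner h) uinvK x_ys ?map_f.
Qed.

Lemma reflection_scalar_on_orth e (e_unit : inn e e = 1) :
  scalar_on_orth 1 (reflection e_unit).
Proof.
exists [:: e] => //; exists 1 => [|x x_e]; first by rewrite normr1.
by rewrite scale1r reflection_orth // x_e ?mem_head.
Qed.

Lemma pu_rep_of (u : unitary ip) : uclass u (pu_rep (pu_of u)).
Proof.
rewrite /pu_rep; case: constructive_indefinite_description => v /= ->.
by exists 1; split=> [|x]; rewrite ?normr1 ?scale1r.
Qed.

Definition pu_scalar_on_orth k (A : PU ip) := scalar_on_orth k (pu_rep A).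

Lemma pu_scalar_on_orth_of k u : scalar_on_orth k u -> pu_scalar_on_orth k (pu_of u).
Proof. by have [ka [ka1 E]] := pu_rep_of u; apply: scalar_on_orth_phase ka1 E. Qed.

Lemma pu_scalar_on_orth_one : pu_scalar_on_orth 0 (pu_one ip).
Proof. exact/pu_scalar_on_orth_of/scalar_on_orth_one. Qed.

Lemma pu_scalar_on_orth_mul a b A B :
  pu_scalar_on_orth a A -> pu_scalar_on_orth b B -> pu_scalar_on_orth (a + b)%N (pu_mul A B).
Proof. by move=> qA qB; apply/pu_scalar_on_orth_of/scalar_on_orth_mul. Qed.

Lemma pu_scalar_on_orth_inv k A : pu_scalar_on_orth k A -> pu_scalar_on_orth k (pu_inv A).
Proof. by move=> qA; apply/pu_scalar_on_orth_of/scalar_on_orth_inv. Qed.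

Lemma pu_scalar_on_orth_conj k B A :
  pu_scalar_on_orth k A -> pu_scalar_on_orth k (pu_mul (pu_mul B A) (pu_inv B)).
Proof.
move=> qA; apply: pu_scalar_on_orth_of.
have [k1 [k1_1 E1]] := pu_rep_of (u_mul (pu_rep B) (pu_rep A)).
have [k2 [k2_1 E2]] := pu_rep_of (u_inv (pu_rep B)).
apply: (@scalar_on_orth_phase _ (u_mul (u_mul (pu_rep B) (pu_rep A)) (u_inv (pu_rep B))) _ (k1 * k2)).
- by rewrite normrM k1_1 k2_1 mulr1.
- by move=> x /=; rewrite E1 E2 /= !ufunZ scalerA.
- exact: scalar_on_orth_conj.
Qed.

Definition orthonormal m (E : 'I_m -> H) := forall i j, inn (E i) (E j) = (i == j)%:R.

Lemma exists_orth_combination m (E : 'I_m -> H) (ys : seq H) : (size ys < m)%N ->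
  exists2 c : 'I_m -> R[i], (exists j, c j != 0) &
    forall y, y \in ys -> inn (\sum_j c j *: E j) y = 0.
Proof.
move=> ys_m.
pose A : 'M[R[i]]_(m, size ys) := \matrix_(i, k) inn (E i) (nth 0 ys k).
have [v /sub_kermxP vA /rV0Pn [j vj0]] : exists2 v : 'rV_m, (v <= kermx A)%MS & v != 0.
  apply/rowV0Pn; rewrite kermx_eq0 -row_leq_rank -ltnNge.
  exact: leq_ltn_trans (rank_leq_col A) ys_m.
exists (v 0) => [|y y_in]; first by exists j.
have y_idx : (index y ys < size ys)%N by rewrite index_mem.
have := congr1 (fun M : 'rV_(size ys) => M 0 (Ordinal y_idx)) vA.
rewrite !mxE inner_suml => vAy; rewrite -[RHS]vAy; apply: eq_bigr => l _.
by rewrite innerZl [A _ _]mxE nth_index.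
Qed.

Lemma orthonormal_unit m (E : 'I_m -> H) i : orthonormal E -> inn (E i) (E i) = 1.
Proof. by move=> oE; rewrite oE eqxx. Qed.

Lemma orthonormal_split n (e : 'I_(n + n) -> H) : orthonormal e ->
  [/\ orthonormal (fun i => e (lshift n i)), orthonormal (fun i => e (rshift n i))
    & forall i j, inn (e (rshift n i)) (e (lshift n j)) = 0].
Proof.
by move=> oe; split=> i j /=; rewrite oe ?eq_lshift ?eq_rshift // eq_sym eq_lrshift.
Qed.

Lemma scalar_dist_le_deviation m (E : 'I_m -> H) (ys : seq H) (mu ka : R[i]) (w : unitary ip) :
  orthonormal E -> (size ys < m)%N ->
  (forall x, (forall y, y \in ys -> inn x y = 0) -> ufun w x = mu *: x) ->
  `|mu - ka| <= \sum_j hn (ufun w (E j) - ka *: E j).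
Proof.
(* evaluate w on a nonzero combination of the E j orthogonal to ys *)
move=> oE ys_m w_mu; have [c [j0 cj0] c_ys] := exists_orth_combination E ys_m.
set x := \sum_j c j *: E j in c_ys.
have x_E j : inn x (E j) = c j.
  rewrite inner_suml (bigD1 j) //= innerZl oE eqxx mulr1 big1 ?addr0 // => i ij.
  by rewrite innerZl oE (negbTE ij) mulr0.
have x_gt0 : 0 < hn x.
  by apply: hnorm_gt0; apply: contraNneq cj0 => x0; rewrite -x_E x0 inner0l.
have E_unit j : hn (E j) = 1 by rewrite /hnorm oE eqxx sqrtC1.
have deviation : (mu - ka) *: x = \sum_j c j *: (ufun w (E j) - ka *: E j).
  rewrite scalerBl -w_mu // ufun_sum scaler_sumr -sumrB; apply: eq_bigr => j _.
  by rewrite ufunZ scalerBr !scalerA mulrC.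
rewrite -(ler_pM2l x_gt0) mulrC -hnormZ deviation mulr_sumr.
apply: le_trans (hnorm_sum _ _ _) _; apply: ler_sum => j _.
by rewrite hnormZ ler_wpM2r ?hnorm_ge0 // -x_E -[hn x]mulr1 -(E_unit j) cauchy_schwarz.
Qed.

Section FlipAlong.
Variables (m : nat) (E : 'I_m -> H) (oE : orthonormal E).

Definition flip_along (s : seq 'I_m) : unitary ip :=
  foldr (fun i u => u_mul (reflection (orthonormal_unit i oE)) u) (u_one ip) s.

Lemma flip_along_cons i s x :
  ufun (flip_along (i :: s)) x = ufun (reflection (orthonormal_unit i oE)) (ufun (flip_along s) x).
Proof. by []. Qed.

Lemma flip_along_orth s x : (forall i, i \in s -> inn x (E i) = 0) -> ufun (flip_along s) x = x.
Proof.
elim: s => [|i s IHs] x_s //; rewrite flip_along_cons.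
rewrite IHs => [|j j_s]; last by rewrite x_s // inE j_s orbT.
by rewrite reflection_orth // x_s ?mem_head.
Qed.

Lemma flip_along_mem s j : uniq s -> j \in s -> ufun (flip_along s) (E j) = - E j.
Proof.
elim: s => [|i s IHs] // /andP [i_s s_uniq]; rewrite inE flip_along_cons => /predU1P [->|j_s].
  rewrite flip_along_orth ?reflection_e // => k k_s.
  by rewrite oE; case: eqP i_s => // ->; rewrite k_s.
by rewrite IHs // ufunN reflection_orth // oE; case: eqP i_s => // <-; rewrite j_s.
Qed.
End FlipAlong.

Definition flip_defect m (E F : 'I_m -> H) (la : R[i]) (w : unitary ip) :=
  \sum_j (hn (ufun w (E j) + la *: E j) + hn (ufun w (F j) - la *: F j)).

Definition near_flip m (E F : 'I_m -> H) (w : unitary ip) :=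
  exists2 la : R[i], `|la| = 1 & flip_defect E F la w < 1.

Lemma flip_defect_phase m (E F : 'I_m -> H) la (w w' : unitary ip) (ka : R[i]) :
  `|ka| = 1 -> (forall x, ufun w' x = ka *: ufun w x) ->
  flip_defect E F (ka * la) w' = flip_defect E F la w.
Proof.
move=> ka1 w'E; apply: eq_bigr => j _.
by rewrite !w'E -!scalerA -scalerDr -scalerBr !hnormZ ka1 !mul1r.
Qed.

Lemma near_flip_phase m (E F : 'I_m -> H) (w w' : unitary ip) (ka : R[i]) :
  `|ka| = 1 -> (forall x, ufun w' x = ka *: ufun w x) -> near_flip E F w -> near_flip E F w'.
Proof.
move=> ka1 w'E [la la1 near]; exists (ka * la); first by rewrite normrM ka1 la1 mulr1.
by rewrite (flip_defect_phase _ _ _ ka1 w'E).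
Qed.

Lemma near_flip_pu m (E F : 'I_m -> H) (u : unitary ip) :
  near_flip E F (pu_rep (pu_of u)) <-> near_flip E F u.
Proof.
have [ka [ka1 repE]] := pu_rep_of u.
have ka0 : ka != 0 by rewrite -normr_eq0 ka1 oner_eq0.
split; last exact: near_flip_phase ka1 repE.
apply: (near_flip_phase (ka := ka^-1)); first by rewrite normfV ka1 invr1.
by move=> x; rewrite repE scalerA mulVf // scale1r.
Qed.

Lemma flip_defect_perturb m (E F : 'I_m -> H) la (u w : unitary ip) eps :
  (forall j, hn (ufun w (E j) - ufun u (E j)) <= eps) ->
  (forall j, hn (ufun w (F j) - ufun u (F j)) <= eps) ->
  flip_defect E F la w <= flip_defect E F la u + (eps + eps) *+ m.
Proof.
move=> wE wF; rewrite -[in X in _ + X](card_ord m) -sumr_const -big_split /=.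
apply: ler_sum => j _; rewrite addrACA.
apply: lerD; [apply: le_trans (hnorm_split _ _ (ufun u (E j))) _
             | apply: le_trans (hnorm_split _ _ (ufun u (F j))) _].
all: by rewrite [leRHS]addrC lerD2r.
Qed.

Lemma near_flip_open m (E F : 'I_m -> H) : sot_open (near_flip E F).
Proof.
move=> u [la la1]; set s := flip_defect E F la u => s_lt1.
have d_gt0 : 0 < 1 - s by rewrite subr_gt0.
pose eps := (1 - s) / (2 * m.+1%:R).
have eps_gt0 : 0 < eps by rewrite divr_gt0 // mulr_gt0 // ltr0n.
have eps_small : (eps + eps) *+ m < 1 - s.
  have -> : 1 - s = (eps + eps) *+ m.+1.
    by rewrite /eps -mulr_natr; field; rewrite addrC natr1 pnatr_eq0.
  by rewrite ltr_pMn2l ?addr_gt0.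
exists ([seq E j | j <- enum 'I_m] ++ [seq F j | j <- enum 'I_m]), eps; split => //.
move=> w w_near; exists la => //.
apply: le_lt_trans (flip_defect_perturb la _ _) _.
- by move=> j; apply/ltW/w_near/mem_In; rewrite mem_cat map_f ?mem_enum.
- by move=> j; apply/ltW/w_near/mem_In; rewrite mem_cat map_f ?mem_enum ?orbT.
by rewrite -ltrBrDl.
Qed.

Lemma near_flip_not_scalar m (E F : 'I_m -> H) k (w : unitary ip) :
  orthonormal E -> orthonormal F -> (k < m)%N -> near_flip E F w -> ~ scalar_on_orth k w.
Proof.
move=> oE oF k_m [la la1 near] [ys ys_k [mu _ w_mu]].
have ys_m : (size ys < m)%N by apply: leq_ltn_trans ys_k k_m.
have mu_E : `|mu + la| <= \sum_j hn (ufun w (E j) + la *: E j).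
  have := scalar_dist_le_deviation (- la) oE ys_m w_mu.
  by rewrite opprK; under eq_bigr do rewrite scaleNr opprK.
have mu_F := scalar_dist_le_deviation la oF ys_m w_mu.
have : `|mu + la| + `|mu - la| < 1.
  by apply: le_lt_trans near; rewrite /flip_defect big_split; apply: lerD.
have : 2 <= `|mu + la| + `|mu - la|.
  have -> : 2 = `|(mu + la) - (mu - la)| by rewrite opprB addrC addrA subrK -mulr2n normrMn la1.
  exact: ler_normB.
by move=> /le_lt_trans/[apply]; rewrite ltrn1.
Qed.

Lemma near_flip_flip_along m (E F : 'I_m -> H) (oE : orthonormal E) :
  (forall i j, inn (F i) (E j) = 0) -> near_flip E F (flip_along oE (enum 'I_m)).
Proof.
move=> FE; exists 1; rewrite ?normr1 // /flip_defect big1 ?ltr01 // => j _.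
rewrite flip_along_mem ?enum_uniq ?mem_enum // flip_along_orth => [|i _]; last exact: FE.
by rewrite !scale1r addNr subrr hnorm0 addr0.
Qed.

Lemma pu_reflection_neq_one (e : 'I_2 -> H) (oe : orthonormal e) :
  pu_of (reflection (orthonormal_unit ord0 oe)) <> pu_one ip.
Proof.
move=> /(f_equal sval) /= refl_one.
have : uclass (reflection (orthonormal_unit ord0 oe)) (reflection (orthonormal_unit ord0 oe)).
  by exists 1; split=> [|x]; rewrite ?normr1 ?scale1r.
rewrite refl_one => -[la [_ la_id]].
have := f_equal (inn^~ (e ord0)) (la_id (e ord0)).
rewrite reflection_e innerNl innerZl oe mulr1.
have := f_equal (inn^~ (e ord_max)) (la_id (e ord_max)).
rewrite reflection_orth ?oe // innerZl oe mulr1.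
by move=> <- /eqP; rewrite eq_sym -addr_eq0 -mulr2n pnatr_eq0.
Qed.

Lemma pu_near_flip_open m (E F : 'I_m -> H) : pu_open (fun A => near_flip E F (pu_rep A)).
Proof.
move=> u /near_flip_pu/near_flip_open [xs [eps [eps_gt0 xs_eps]]].
by exists xs, eps; split=> // w /xs_eps/near_flip_pu.
Qed.


Lemma pu_not_tbng : infinite_dimensional ip ->
  ~ top_bounded_normal_generation (@pu_mul R H ip) (@pu_inv R H ip) (pu_one ip) (@pu_open R H ip).
Proof.
move=> inf_dim; have [e oe] := inf_dim 2%N.
apply: (not_tbng_of_len_le pu_scalar_on_orth_one pu_scalar_on_orth_mul
  pu_scalar_on_orth_inv pu_scalar_on_orth_conj (@pu_reflection_neq_one _ oe)
  (pu_scalar_on_orth_of (reflection_scalar_on_orth (orthonormal_unit ord0 oe)))).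
move=> m; have [e' /orthonormal_split [oE oF FE]] := inf_dim (m.+1 + m.+1)%N.
exists (fun A => near_flip (fun i => e' (lshift m.+1 i)) (fun i => e' (rshift m.+1 i)) (pu_rep A)).
  exact: pu_near_flip_open.
exists (pu_of (flip_along oE (enum 'I_m.+1))); first exact/near_flip_pu/near_flip_flip_along.
by move=> A /(near_flip_not_scalar oE oF (ltnSn m)).
Qed.
End InnerProductSpace.

Theorem mainTheorem7 :
  (forall X : Type, infinite_type X ->
     ~ top_bounded_normal_generation (@sym_mul X) (@sym_inv X) (@sym_one X)
         (@sym_open X)) /\
  (forall (R : realType) (H : lmodType R[i]) (ip : inner_product H),
     hilbert_complete ip -> infinite_dimensional ip ->
     ~ top_bounded_normal_generation (@pu_mul R H ip) (@pu_inv R H ip)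
         (@pu_one R H ip) (@pu_open R H ip)).
Proof.
split; first exact: sym_not_tbng.
by move=> R H ip _; apply: pu_not_tbng.
Qed.
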